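(* Let $p$ be a prime, $a\in\mathbb{N}$, and put $\nu_p=1$ if $p=2$ and $\nu_p=0$ if $p>2$. Let $\mathbf{u}\in(\mathbb{Z}/p^a\mathbb{Z})^4$ with $p\nmid\mathbf{u}$ and $Q_1(\mathbf{u})\equiv Q_2(\mathbf{u})\equiv0\bmod p^a$. Then for every integer $b>a$, $$\#\big\{\mathbf{v}\in(\mathbb{Z}/p^b\mathbb{Z})^4:\ Q_1(\mathbf{v})\equiv Q_2(\mathbf{v})\equiv0\bmod p^b,\ \mathbf{v}\equiv\mathbf{u}\bmod p^a\big\}\le\begin{cases}p^{2(b-a)}&\text{if }p\nmid\Delta,\\ p^{2\nu_p+3(b-a)}&\text{if }p\mid\Delta.\end{cases}$$
   Context: $L_i(x_1,x_2)=a_ix_1+b_ix_2\in\mathbb{Z}[x_1,x_2]$ ($1\le i\le4$) with $\gcd(a_i,b_i)=1$ and pairwise non-proportional; $Q_1(\mathbf{y})=\sum_{i=1}^4a_iy_i^2$, $Q_2(\mathbf{y})=-\sum_{i=1}^4b_iy_i^2$. $\Delta=\prod_{p\in\mathcal{P}}p$ where $\mathcal{P}=\{2\}\cup\{p\text{ prime}: p\mid a_ib_j-a_jb_i\text{ for some }i\ne j\}$. $p\nmid\mathbf{u}$ means not all coordinates of $\mathbf{u}$ are divisible by $p$. *)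

From mathcomp Require Import all_boot all_order all_algebra.
Set Implicit Arguments. Unset Strict Implicit. Unset Printing Implicit Defensive.
Import Order.TTheory GRing.Theory Num.Theory.
Local Open Scope ring_scope.

(* Linear forms L_i = a_i x1 + b_i x2, encoded by coefficient families a b : 'I_4 -> int. *)

Definition detL (a b : 'I_4 -> int) (i j : 'I_4) : int := a i * b j - a j * b i.

Definition forms_ok (a b : 'I_4 -> int) : Prop :=
  (forall i, gcdz (a i) (b i) = 1%N) /\ (forall i j, i != j -> detL a b i j != 0).

Definition inP (a b : 'I_4 -> int) (p : nat) : bool :=
  prime p && ((p == 2)%N ||
    [exists i : 'I_4, exists j : 'I_4, (i != j) && (p%:Z %| detL a b i j)%Z]).

(* An upper bound for all elements of P (when the forms are non-proportional). *)
Definition Pbound (a b : 'I_4 -> int) : nat :=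
  (2 * \prod_(i : 'I_4) \prod_(j : 'I_4 | i != j) `|detL a b i j|%N)%N.

Definition Delta (a b : 'I_4 -> int) : nat :=
  (\prod_(p < (Pbound a b).+1 | inP a b p) p)%N.

Definition Q1 (a : 'I_4 -> int) (y : 'I_4 -> int) : int := \sum_(i < 4) a i * y i ^+ 2.
Definition Q2 (b : 'I_4 -> int) (y : 'I_4 -> int) : int := - \sum_(i < 4) b i * y i ^+ 2.

Definition liftv (m : nat) (v : {ffun 'I_4 -> 'I_m}) : 'I_4 -> int := fun i => (v i : nat)%:Z.

Definition nu (p : nat) : nat := if p == 2%N then 1%N else 0%N.

(* Reduce a lift v modulo p^(c+1) to its residue v0 modulo p^c and write v = v0 + p^c t
   with digits t in [0, p)^4.  For a diagonal form, Q(v) = Q(v0) + 2 p^c B(v0, t) + p^(2c) Q(t),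
   so two solutions in the same fibre of the reduction with equal digits outside a set J of
   coordinates have a digit difference d with B_Q1(u, d) = B_Q2(u, d) = 0 mod p.  When the
   Jacobian of (Q1, Q2) at u is injective mod p on the coordinates in J, d vanishes, so each
   fibre has at most p^(4 - |J|) elements.  One can always take |J| = 1 (gcd(a_i, b_i) = 1 at a
   unit coordinate of u), and |J| = 2 when p does not divide Delta (two unit coordinates and an
   invertible 2x2 minor).  For p = 2 the factor 2 in the cross term costs one power of p: one
   counts lifts that solve the equations one level deeper, paying 2^4 at the last step. *)

From mathcomp Require Import all_boot all_order all_algebra zify ring.
Import Order.TTheory GRing.Theory Num.Theory.
Set Implicit Arguments. Unset Strict Implicit. Unset Printing Implicit Defensive.
Local Open Scope ring_scope.

Lemma card_le_mul_fibers (T U : finType) (f : T -> U) (A : {set T}) (B : {set U})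
    (K : nat) :
  {in A, forall x, f x \in B} -> (forall y, #|[set x in A | f x == y]| <= K)%N ->
  (#|A| <= K * #|B|)%N.
Proof.
move=> fAB fibK; rewrite -sum1_card (partition_big f (mem B)) //=.
rewrite mulnC -sum_nat_const leq_sum // => y _.
by rewrite sum1dep_card (leq_trans _ (fibK y)) // -setIdE cardsE.
Qed.

Definition polar (k y z : 'I_4 -> int) : int := \sum_(i < 4) k i * y i * z i.

Lemma Q1_add_scale (k y z : 'I_4 -> int) (s : int) :
  Q1 k (fun i => y i + s * z i) = Q1 k y + 2 * s * polar k y z + s ^+ 2 * Q1 k z.
Proof. by rewrite /Q1 /polar !mulr_sumr -!big_split /=; apply: eq_bigr => i _; ring. Qed.

Lemma polarBr (k y z z' : 'I_4 -> int) :
  polar k y z - polar k y z' = polar k y (fun i => z i - z' i).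
Proof. by rewrite /polar -sumrB; apply: eq_bigr => i _; ring. Qed.

Lemma dvdz_polar_congr (d : int) (k y y' z : 'I_4 -> int) :
  (forall i, (y i == y' i %[mod d])%Z) -> (d %| polar k y z)%Z -> (d %| polar k y' z)%Z.
Proof.
move=> yy' dvd_yz.
have -> : polar k y' z = polar k y z - \sum_i k i * (y i - y' i) * z i.
  by rewrite /polar -sumrB; apply: eq_bigr => i _; ring.
rewrite rpredB // rpred_sum // => i _.
by apply/dvdz_mulr/dvdz_mull; rewrite -eqz_mod_dvd yy'.
Qed.

Lemma Q2E (b y : 'I_4 -> int) : Q2 b y = - Q1 b y.
Proof. by []. Qed.

Lemma eq_nat_of_dvdz_sub (p t t' : nat) : (t < p)%N -> (t' < p)%N ->
  (p%:Z %| t%:Z - t'%:Z)%Z -> t = t'.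
Proof.
move=> tp t'p; rewrite -eqz_mod_dvd !modz_nat eqz_nat !modn_small //.
by move/eqP.
Qed.

Section Lifting.

Variables (a b : 'I_4 -> int) (p ea : nat) (u : {ffun 'I_4 -> 'I_(p ^ ea)}).
Hypotheses (p_prime : prime p) (ea_gt0 : (0 < ea)%N).

Lemma dvdz_primeM (x y : int) : (p%:Z %| x * y)%Z = (p%:Z %| x)%Z || (p%:Z %| y)%Z.
Proof. by rewrite !dvdzE abszM Euclid_dvdM. Qed.

Lemma not_dvdz_coprime (x y : int) :
  gcdz x y = 1%N -> (p%:Z %| x)%Z -> (p%:Z %| y)%Z -> False.
Proof.
move=> xy1 px py; have := dvdz_gcd p x y; rewrite px py xy1 dvdzE /= dvdn1.
by move/eqP=> p1; move: p_prime; rewrite p1.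
Qed.

Lemma expn_p_gt0 c : (0 < p ^ c)%N.
Proof. by rewrite expn_gt0 prime_gt0. Qed.

Definition red c (v : {ffun 'I_4 -> 'I_(p ^ c.+1)}) : {ffun 'I_4 -> 'I_(p ^ c)} :=
  [ffun i => Ordinal (ltn_pmod (v i) (expn_p_gt0 c))].

Definition digit c (v : {ffun 'I_4 -> 'I_(p ^ c.+1)}) i : nat := (v i %/ p ^ c)%N.

Lemma digit_lt c (v : {ffun 'I_4 -> 'I_(p ^ c.+1)}) i : (digit v i < p)%N.
Proof. by rewrite /digit ltn_divLR ?expn_p_gt0 // -expnS. Qed.

Lemma red_digitE c (v : {ffun 'I_4 -> 'I_(p ^ c.+1)}) i :
  (v i : nat) = (red v i + p ^ c * digit v i)%N.
Proof. by rewrite ffunE /= addnC mulnC -divn_eq. Qed.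

Lemma liftv_red_digit c (v : {ffun 'I_4 -> 'I_(p ^ c.+1)}) i :
  liftv v i = liftv (red v) i + (p ^ c)%:Z * (digit v i)%:Z.
Proof. by rewrite /liftv {1}(red_digitE v i). Qed.

Lemma red_digit_inj c (v v' : {ffun 'I_4 -> 'I_(p ^ c.+1)}) :
  red v = red v' -> (forall i, digit v i = digit v' i) -> v = v'.
Proof.
move=> rvv' dvv'; apply/ffunP => i; apply: val_inj.
by rewrite /= (red_digitE v) (red_digitE v') rvv' dvv'.
Qed.

Lemma red_congr c (v : {ffun 'I_4 -> 'I_(p ^ c.+1)}) i : (ea <= c)%N ->
  (liftv v i == liftv u i %[mod (p ^ ea)%:Z])%Z ->
  (liftv (red v) i == liftv u i %[mod (p ^ ea)%:Z])%Z.
Proof.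
by move=> eac; rewrite /liftv !modz_nat !eqz_nat ffunE /= modn_dvdm // dvdn_exp2l.
Qed.

Definition lifts m c : {set {ffun 'I_4 -> 'I_(p ^ c)}} :=
  [set v | [&& ((p ^ m)%:Z %| Q1 a (liftv v))%Z,
           ((p ^ m)%:Z %| Q2 b (liftv v))%Z &
           [forall i, (liftv v i == liftv u i %[mod (p ^ ea)%:Z])%Z]]].

Lemma card_lifts_base m : (#|lifts m ea| <= 1)%N.
Proof.
rewrite -[leqRHS](cards1 u); apply/subset_leq_card/subsetP => v.
rewrite !inE => /and3P[_ _ /forallP vu]; apply/eqP/ffunP => i; apply: val_inj.
by move: (vu i); rewrite /liftv !modz_nat eqz_nat !modn_small // => /eqP.
Qed.

Definition digitz c (v : {ffun 'I_4 -> 'I_(p ^ c.+1)}) i : int := (digit v i)%:Z.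

Lemma Q1_liftv k c (v : {ffun 'I_4 -> 'I_(p ^ c.+1)}) :
  Q1 k (liftv v) = Q1 k (liftv (red v)) + 2 * (p ^ c)%:Z * polar k (liftv (red v)) (digitz v)
                   + (p ^ c)%:Z ^+ 2 * Q1 k (digitz v).
Proof.
rewrite -Q1_add_scale; apply: eq_bigr => i _.
by rewrite liftv_red_digit.
Qed.

Lemma dvdz_expn_2expn m c : (m <= c + nu p)%N -> ((p ^ m)%:Z %| 2 * (p ^ c)%:Z)%Z.
Proof.
rewrite dvdzE abszM /= /nu; case: eqP => [-> | _] lemc.
  by rewrite -expnS dvdn_exp2l // -addn1.
by rewrite dvdn_mull // dvdn_exp2l // -(addn0 c).
Qed.

Lemma dvdz_Q1_red m k c (v : {ffun 'I_4 -> 'I_(p ^ c.+1)}) :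
  (m <= c + nu p)%N -> (m <= 2 * c)%N ->
  ((p ^ m)%:Z %| Q1 k (liftv v))%Z -> ((p ^ m)%:Z %| Q1 k (liftv (red v)))%Z.
Proof.
move=> lemc lem2c dvd_v.
have dvd_sq : ((p ^ m)%:Z %| (p ^ c)%:Z ^+ 2)%Z.
  by rewrite dvdzE abszX /= -expnM dvdn_exp2l // mulnC.
rewrite (_ : Q1 k (liftv (red v)) = Q1 k (liftv v)
  - 2 * (p ^ c)%:Z * polar k (liftv (red v)) (digitz v) - (p ^ c)%:Z ^+ 2 * Q1 k (digitz v)).
  by rewrite !rpredB // dvdz_mulr // dvdz_expn_2expn.
by rewrite Q1_liftv; ring.
Qed.

Lemma red_lifts m m' c : (ea <= c)%N -> (m <= m')%N -> (m <= c + nu p)%N ->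
  {in lifts m' c.+1, forall v, red v \in lifts m c}.
Proof.
move=> eac lemm' lemc v; rewrite !inE => /and3P[dvd_a dvd_b /forallP vu].
have lem2c : (m <= 2 * c)%N by move: lemc; rewrite /nu; case: ifP; lia.
have dvd_m : ((p ^ m)%:Z %| (p ^ m')%:Z)%Z by rewrite dvdzE dvdn_exp2l.
rewrite !Q2E !rpredN in dvd_b *.
rewrite !(dvdz_Q1_red lemc lem2c) ?(dvdz_trans dvd_m) //=.
by apply/forallP => i; apply: red_congr.
Qed.

Lemma dvdz_cancel_2expn c (L : int) :
  ((p ^ (c + nu p).+1)%:Z %| 2 * (p ^ c)%:Z * L)%Z -> (p%:Z %| L)%Z.
Proof.
rewrite !dvdzE !abszM /= -addnS expnD [(2 * _)%N]mulnC -mulnA.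
rewrite dvdn_pmul2l ?expn_p_gt0 // /nu; case: eqP => [-> | p_neq2].
  by rewrite expnS dvdn_pmul2l.
rewrite expn1 Euclid_dvdM // => /orP[] // p_dvd2.
by have := dvdn_leq (isT : (0 < 2)%N) p_dvd2; have := prime_gt1 p_prime; lia.
Qed.

Lemma dvdz_polar_digitB k c (v v' : {ffun 'I_4 -> 'I_(p ^ c.+1)}) :
  (c + nu p < 2 * c)%N -> red v = red v' ->
  ((p ^ (c + nu p).+1)%:Z %| Q1 k (liftv v))%Z ->
  ((p ^ (c + nu p).+1)%:Z %| Q1 k (liftv v'))%Z ->
  (p%:Z %| polar k (liftv (red v)) (fun i => digitz v i - digitz v' i))%Z.
Proof.
move=> lt2c rvv' dvd_v dvd_v'; apply: (@dvdz_cancel_2expn c).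
have dvd_sq : ((p ^ (c + nu p).+1)%:Z %| (p ^ c)%:Z ^+ 2)%Z.
  by rewrite dvdzE abszX /= -expnM dvdn_exp2l // mulnC.
rewrite -polarBr (_ : _ * _ = Q1 k (liftv v) - Q1 k (liftv v')
  - (p ^ c)%:Z ^+ 2 * (Q1 k (digitz v) - Q1 k (digitz v'))).
  by rewrite !rpredB // dvdz_mulr.
by rewrite (Q1_liftv k v) (Q1_liftv k v') rvv'; ring.
Qed.

(* The Jacobian of (Q1, Q2) at u (up to the factor 2 and sign), restricted to the
   coordinates in J, is injective modulo p. *)
Definition jac_inj (J : {set 'I_4}) : Prop :=
  forall d : 'I_4 -> int, (forall i, i \notin J -> d i = 0) ->
  (p%:Z %| polar a (liftv u) d)%Z -> (p%:Z %| polar b (liftv u) d)%Z ->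
  forall i, i \in J -> (p%:Z %| d i)%Z.

Definition digits_off_determine (J : {set 'I_4}) m c : Prop :=
  {in lifts m c.+1 &, forall v v', red v = red v' ->
     (forall i, i \notin J -> digit v i = digit v' i) -> v = v'}.

Lemma digits_off_set0 m c : digits_off_determine set0 m c.
Proof.
move=> v v' _ _ rvv' dvv'; apply: red_digit_inj => // i.
by apply: dvv'; rewrite inE.
Qed.

Lemma jac_inj_digits_off J c : jac_inj J -> (ea <= c)%N -> (c + nu p < 2 * c)%N ->
  digits_off_determine J (c + nu p).+1 c.
Proof.
move=> jacJ eac lt2c v v'; rewrite !inE !Q2E !rpredN.
move=> /and3P[dvd_a dvd_b /forallP vu] /and3P[dvd_a' dvd_b' _] rvv' dvv'.
apply: red_digit_inj => // i; case: (boolP (i \in J)) => [iJ | /dvv'] //.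
apply: (@eq_nat_of_dvdz_sub p); rewrite ?digit_lt //.
have red_vu j : (liftv (red v) j == liftv u j %[mod p%:Z])%Z.
  move: (red_congr eac (vu j)); rewrite !eqz_mod_dvd; apply: dvdz_trans.
  by rewrite dvdzE dvdn_exp.
apply: (jacJ (fun j => digitz v j - digitz v' j)) iJ => [j /dvv' dj | |].
- by rewrite /digitz dj subrr.
- exact/(dvdz_polar_congr red_vu)/dvdz_polar_digitB.
- exact/(dvdz_polar_congr red_vu)/dvdz_polar_digitB.
Qed.

Lemma card_lifts_fiber (J : {set 'I_4}) m c (y : {ffun 'I_4 -> 'I_(p ^ c)}) :
  digits_off_determine J m c ->
  (#|[set v in lifts m c.+1 | red v == y]| <= p ^ #|~: J|)%N.
Proof.
move=> digit_inj.
pose zero : 'I_p := Ordinal (prime_gt0 p_prime).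
pose h (v : {ffun 'I_4 -> 'I_(p ^ c.+1)}) : {ffun 'I_4 -> 'I_p} :=
  [ffun i => if i \in J then zero else Ordinal (digit_lt v i)].
rewrite -(@card_in_imset _ _ h); last first.
  move=> v v' /setIdP[v_lifts /eqP rv] /setIdP[v'_lifts /eqP rv'] hvv'.
  apply: digit_inj => // [|i iJ]; first by rewrite rv rv'.
  have := congr1 (fun f : {ffun 'I_4 -> 'I_p} => val (f i)) hvv'.
  by rewrite /= !ffunE (negbTE iJ).
rewrite -[p in (_ <= p ^ _)%N]card_ord -(card_pffun_on zero).
apply/subset_leq_card/subsetP => _ /imsetP[v _ ->]; apply/pffun_onP; split=> //.
by apply/subsetP => i; rewrite !inE ffunE; case: (i \in J); rewrite ?eqxx.
Qed.

Lemma card_lifts_step (J : {set 'I_4}) m m' c :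
  (ea <= c)%N -> (m <= m')%N -> (m <= c + nu p)%N -> digits_off_determine J m' c ->
  (#|lifts m' c.+1| <= p ^ #|~: J| * #|lifts m c|)%N.
Proof.
move=> eac lemm' lemc digit_inj.
apply: card_le_mul_fibers => [|y]; first exact: red_lifts.
exact: card_lifts_fiber.
Qed.

Lemma card_lifts_chain (J : {set 'I_4}) n : jac_inj J -> (p = 2 -> 3 <= #|~: J|)%N ->
  (#|lifts (ea + n + nu p) (ea + n)| <= p ^ (nu p + #|~: J| * n))%N.
Proof.
move=> jacJ J_big; elim: n => [|n IH].
  by rewrite addn0 (leq_trans (card_lifts_base _)) // expn_gt0 prime_gt0.
have eac : (ea <= ea + n)%N := leq_addr n ea.
rewrite addnS addSn.
have [lt2c | ge2c] := ltnP (ea + n + nu p) (2 * (ea + n)).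
  have digits_off := jac_inj_digits_off jacJ eac lt2c.
  apply: leq_trans (card_lifts_step eac (leqnSn _) (leqnn _) digits_off) _.
  by rewrite mulnS addnCA [leqRHS]expnD leq_mul2l IH orbT.
(* Only p = 2 and ea + n = 1 escape the linearisation; there the trivial fibre bound p^4
   suffices. *)
have [p2 n0] : p = 2%N /\ n = 0%N by move: ge2c; rewrite /nu; case: eqP; lia.
apply: leq_trans (card_lifts_step (J := set0) eac (leqnSn _) (leqnn _) _) _.
  exact: digits_off_set0.
rewrite setC0 cardsT card_ord n0 addn0.
apply: leq_trans (leq_mul (leqnn _) (card_lifts_base _)) _.
by rewrite muln1 leq_exp2l ?prime_gt1 // /nu p2 /= muln1 add1n ltnS J_big.
Qed.

Lemma card_lifts (J : {set 'I_4}) eb : jac_inj J -> (p = 2 -> 3 <= #|~: J|)%N ->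
  (ea < eb)%N -> (#|lifts eb eb| <= p ^ (2 * nu p + #|~: J| * (eb - ea)))%N.
Proof.
move=> jacJ J_big /subnKC <-; rewrite addSnnS addKn; move: (eb - ea.+1)%N => n.
have [p2 | p_neq2] := eqVneq p 2%N; last first.
  have := card_lifts_chain n.+1 jacJ J_big.
  by rewrite /nu (negbTE p_neq2) addn0.
have nu2 : nu p = 1%N by rewrite /nu p2.
have := card_lifts_chain n jacJ J_big; rewrite nu2 addn1 addnS => chain.
apply: leq_trans (card_lifts_step (J := set0) (leq_addr n ea) (leqnn _) _ _) _.
- by rewrite nu2 addn1.
- exact: digits_off_set0.
rewrite setC0 cardsT card_ord.
apply: leq_trans (leq_mul (leqnn _) chain) _.
by rewrite -expnD leq_exp2l ?prime_gt1 //; have := J_big p2; lia.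
Qed.

Lemma polar_supp k y d (J : {set 'I_4}) : (forall i, i \notin J -> d i = 0) ->
  polar k y d = \sum_(i in J) k i * y i * d i.
Proof.
move=> dJ; rewrite /polar (bigID (mem J)) /= addrC big1 ?add0r // => i /dJ ->.
by rewrite mulr0.
Qed.

Lemma jac_inj1 i : gcdz (a i) (b i) = 1%N -> ~~ (p%:Z %| liftv u i)%Z -> jac_inj [set i].
Proof.
move=> ab1 ui d dJ; rewrite !(polar_supp _ _ dJ) !big_set1 !dvdz_primeM (negbTE ui) !orbF.
move=> /orP[] pa /orP[] pb // j; rewrite inE => /eqP -> //.
by case: (not_dvdz_coprime ab1 pa pb).
Qed.

Lemma jac_inj2 i j : i != j -> ~~ (p%:Z %| detL a b i j)%Z ->
  ~~ (p%:Z %| liftv u i)%Z -> ~~ (p%:Z %| liftv u j)%Z -> jac_inj [set i; j].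
Proof.
move=> ij pdet ui uj d dJ; rewrite !(polar_supp _ _ dJ) !big_setU1 ?inE //= !big_set1.
set xi := liftv u i * d i; set xj := liftv u j * d j => pa pb l.
have pxi : (p%:Z %| detL a b i j * xi)%Z.
  rewrite (_ : _ * _ = b j * (a i * liftv u i * d i + a j * liftv u j * d j)
                     - a j * (b i * liftv u i * d i + b j * liftv u j * d j)).
    by rewrite rpredB // dvdz_mull.
  by rewrite /detL /xi; ring.
have pxj : (p%:Z %| detL a b i j * xj)%Z.
  rewrite (_ : _ * _ = a i * (b i * liftv u i * d i + b j * liftv u j * d j)
                     - b i * (a i * liftv u i * d i + a j * liftv u j * d j)).
    by rewrite rpredB // dvdz_mull.
  by rewrite /detL /xj; ring.
rewrite !dvdz_primeM (negbTE pdet) (negbTE ui) (negbTE uj) /= in pxi pxj.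
by rewrite !inE => /orP[] /eqP ->.
Qed.

Lemma dvdz_coef_of_Q1 k (y : 'I_4 -> int) i :
  (forall j, j != i -> (p%:Z %| y j)%Z) -> ~~ (p%:Z %| y i)%Z ->
  (p%:Z %| Q1 k y)%Z -> (p%:Z %| k i)%Z.
Proof.
move=> yj yi; rewrite /Q1 (bigD1 i) //= rpredDr.
  by rewrite expr2 !dvdz_primeM (negbTE yi) !orbF.
by apply: rpred_sum => j /yj pyj; rewrite expr2 !dvdz_mull.
Qed.

Lemma exists_second_unit i : (forall j, gcdz (a j) (b j) = 1%N) ->
  ~~ (p%:Z %| liftv u i)%Z ->
  ((p ^ ea)%:Z %| Q1 a (liftv u))%Z -> ((p ^ ea)%:Z %| Q2 b (liftv u))%Z ->
  exists2 j, i != j & ~~ (p%:Z %| liftv u j)%Z.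
Proof.
move=> ab1 ui pQa pQb.
have p_pea : (p%:Z %| (p ^ ea)%:Z)%Z by rewrite dvdzE dvdn_exp.
case: (pickP [pred j | (i != j) && ~~ (p%:Z %| liftv u j)%Z]) => [j /andP[] | no_unit].
  by exists j.
have uj j : j != i -> (p%:Z %| liftv u j)%Z.
  by move=> ji; move: (no_unit j); rewrite /= eq_sym ji => /negbFE.
exfalso; apply: (not_dvdz_coprime (ab1 i)); apply: (dvdz_coef_of_Q1 uj ui).
  exact: dvdz_trans pQa.
by rewrite -rpredN -Q2E (dvdz_trans p_pea).
Qed.

Lemma dvdn_Delta : (forall i j, i != j -> detL a b i j != 0) ->
  inP a b p -> (p %| Delta a b)%N.
Proof.
move=> det_neq0 /andP[_ p_in].
have Pbound_gt0 : (0 < Pbound a b)%N.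
  rewrite /Pbound muln_gt0 /=; apply/prodn_gt0 => i; apply/prodn_cond_gt0 => j ij.
  by rewrite absz_gt0 det_neq0.
have p_Pbound : (p %| Pbound a b)%N.
  case/orP: p_in => [/eqP -> | /existsP[i /existsP[j /andP[ij p_det]]]].
    exact: dvdn_mulr.
  rewrite /Pbound dvdn_mull // (bigD1 i) //= dvdn_mulr // (bigD1 j) //= dvdn_mulr //.
have p_lt : (p < (Pbound a b).+1)%N by rewrite ltnS dvdn_leq.
by rewrite /Delta (bigD1 (Ordinal p_lt)) ?dvdn_mulr //= /inP p_prime.
Qed.

Lemma Delta_coprime : (forall i j, i != j -> detL a b i j != 0) ->
  ~~ (p %| Delta a b)%N -> p != 2%N /\ forall i j, i != j -> ~~ (p%:Z %| detL a b i j)%Z.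
Proof.
move=> det_neq0 pDelta; split.
  by apply: contra pDelta => p2; apply: dvdn_Delta; rewrite // /inP p_prime p2.
move=> i j ij; apply: contra pDelta => p_det; apply: dvdn_Delta; rewrite // /inP p_prime.
by apply/orP; right; apply/existsP; exists i; apply/existsP; exists j; rewrite ij.
Qed.

End Lifting.

Lemma exponent_gt0_of_unit p e (u : {ffun 'I_4 -> 'I_(p ^ e)}) i :
  ~~ (p%:Z %| liftv u i)%Z -> (0 < e)%N.
Proof.
case: e u => // u; rewrite /liftv.
have : (u i < 1)%N by apply: leq_trans (ltn_ord (u i)) _; rewrite expn0.
by rewrite ltnS leqn0 => /eqP ->; rewrite dvdz0.
Qed.

Theorem lemma3p3 (a b : 'I_4 -> int) (p ea : nat) (u : {ffun 'I_4 -> 'I_(p ^ ea)}) :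
  forms_ok a b ->
  prime p ->
  (exists i, ~~ (p%:Z %| liftv u i)%Z) ->
  ((p ^ ea)%:Z %| Q1 a (liftv u))%Z ->
  ((p ^ ea)%:Z %| Q2 b (liftv u))%Z ->
  forall eb : nat, (ea < eb)%N ->
  (#|[set v : {ffun 'I_4 -> 'I_(p ^ eb)} |
       [&& ((p ^ eb)%:Z %| Q1 a (liftv v))%Z,
           ((p ^ eb)%:Z %| Q2 b (liftv v))%Z &
           [forall i, (liftv v i == liftv u i %[mod (p ^ ea)%:Z])%Z]]]|
   <= if ~~ (p %| Delta a b)%N then p ^ (2 * (eb - ea))
      else p ^ (2 * nu p + 3 * (eb - ea)))%N.
Proof.
move=> [ab1 det_neq0] p_prime [i ui] pQa pQb eb lt_ab.
have ea_gt0 := exponent_gt0_of_unit ui.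
rewrite -/(lifts a b u eb eb); case: ifP => [pDelta | _].
  have [p_neq2 det_unit] := Delta_coprime p_prime det_neq0 pDelta.
  have [j ij uj] := exists_second_unit p_prime ea_gt0 ab1 ui pQa pQb.
  have jacJ := jac_inj2 p_prime ij (det_unit _ _ ij) ui uj.
  apply: leq_trans (card_lifts p_prime ea_gt0 jacJ _ lt_ab) _.
    by move/eqP: p_neq2.
  by rewrite /nu (negbTE p_neq2) cardsCs setCK cards2 ij card_ord.
apply: leq_trans (card_lifts p_prime ea_gt0 (jac_inj1 p_prime (ab1 i) ui) _ lt_ab) _.
all: by rewrite cardsC1 card_ord.
Qed.
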